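(* Let $p,q$ be natural numbers and let $T=T_v$ with $v=\{(p_n,\ell_n,q_n,m_n):n\in\mathbb N\}\in\mathcal W$. If the set $$\Big\{n\in\mathbb N:\ \frac{q_n}{q}=\frac{p_n}{p}\in\mathbb N\Big\}$$ is infinite, then $T^p\times T^q$ and $T^{-p}\times T^q$ are conservative.
   Context: Rank-one construction (cutting and stacking): let $a_n,b_n,c_n,d_n$ ($n\ge 0$) be sequences of positive integers. Let $G_0$ be the unit interval $[0,1)$, a column of height $H_0=1$ (set $h_0=1$). Given the column $G_n$ of height $H_n$, form $G_{n+1}$ by cutting $G_n$ into four subcolumns of equal width, placing $a_n,b_n,c_n,d_n$ spacers on top of the first, second, third and fourth subcolumns respectively, and stacking the subcolumns from left to right. This defines a Lebesgue-measure-preserving invertible transformation $T$ on a subset of $\mathbb R$ with Lebesgue measure $\mu$. Put $p_n=H_n+a_n$, $\ell_n=H_n+b_n$, $q_n=H_n+c_n$, $m_n=H_n+d_n$ and $h_{n+1}=p_n+\ell_n+q_n+H_n$. Write $T=T_v$ with $v=\{(p_n,\ell_n,q_n,m_n)\}$. $\mathcal W$ is the set of such $v$ with $\lim p_n/h_n=\infty$, $\ell_n>n(p_n+q_n+2h_n)$ and $m_n>n\,h_{n+1}$ for all $n$. A measure-preserving $S$ is conservative if for every set $A$ of positive measure there is $n\ge1$ with $\mu(S^{-n}A\cap A)>0$. *)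

From Stdlib Require Import Reals Lra Lia Arith List ClassicalEpsilon.
Import ListNotations.
Open Scope R_scope.

(* Spacer sequences a b c d : nat -> nat (positivity is a hypothesis). *)

(* Width of the levels of column G_n : 4^{-n}. *)
Definition width (n : nat) : R := (/ 4) ^ n.

Definition spacers (s w : R) (count : nat) : list R :=
  map (fun j => s + INR j * w) (seq 0 count).

(* col a b c d n = (left endpoints of the levels of G_n, bottom to top,
   right end of the region of R used so far).  Level i of G_n is
   [L_i, L_i + width n).  G_0 = [0,1); new spacers are taken as fresh
   intervals to the right of everything used so far. *)
Fixpoint col (a b c d : nat -> nat) (n : nat) : list R * R :=
  match n with
  | O => ([0], 1)
  | S k =>
      let (ls, r) := col a b c d k in
      let w := width (S k) in
      let sub (j : nat) := map (fun x => x + INR j * w) ls in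
      (sub 0%nat ++ spacers r w (a k)
       ++ sub 1%nat ++ spacers (r + INR (a k) * w) w (b k)
       ++ sub 2%nat ++ spacers (r + INR (a k + b k) * w) w (c k)
       ++ sub 3%nat ++ spacers (r + INR (a k + b k + c k) * w) w (d k),
       r + INR (a k + b k + c k + d k) * w)
  end.

Definition levels a b c d n : list R := fst (col a b c d n).

Definition in_level a b c d (n i : nat) (x : R) : Prop :=
  (i < length (levels a b c d n))%nat /\
  nth i (levels a b c d n) 0 <= x < nth i (levels a b c d n) 0 + width n.

Definition Xspace a b c d (x : R) : Prop := exists n i, in_level a b c d n i x.

Definition Tgraph a b c d (x y : R) : Prop :=
  exists n i, (S i < length (levels a b c d n))%nat /\ in_level a b c d n i x /\
    y = x - nth i (levels a b c d n) 0 + nth (S i) (levels a b c d n) 0.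

(* T (defined off the graph, a null set, as the identity) and its inverse. *)
Definition Tmap a b c d (x : R) : R :=
  epsilon (inhabits 0) (fun y => Tgraph a b c d x y \/
                                 (~ (exists z, Tgraph a b c d x z) /\ y = x)).
Definition Tinv a b c d (y : R) : R :=
  epsilon (inhabits 0) (fun x => Tgraph a b c d x y \/
                                 (~ (exists z, Tgraph a b c d z y) /\ x = y)).

Fixpoint Hc (a b c d : nat -> nat) (n : nat) : nat :=
  match n with
  | O => 1%nat
  | S k => (4 * Hc a b c d k + a k + b k + c k + d k)%nat
  end.
Definition pp a b c d n : nat := (Hc a b c d n + a n)%nat.
Definition ll a b c d n : nat := (Hc a b c d n + b n)%nat.
Definition qq a b c d n : nat := (Hc a b c d n + c n)%nat.
Definition mm a b c d n : nat := (Hc a b c d n + d n)%nat.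
Definition hh a b c d (n : nat) : nat :=
  match n with
  | O => 1%nat
  | S k => (pp a b c d k + ll a b c d k + qq a b c d k + Hc a b c d k)%nat
  end.

Definition in_W (a b c d : nat -> nat) : Prop :=
  cv_infty (fun n => INR (pp a b c d n) / INR (hh a b c d n)) /\
  (forall n, (ll a b c d n > n * (pp a b c d n + qq a b c d n + 2 * hh a b c d n))%nat) /\
  (forall n, (mm a b c d n > n * hh a b c d (S n))%nat).

Definition set2 := R * R -> Prop.

Fixpoint psum (f : nat -> R) (N : nat) : R :=
  match N with O => 0 | S k => psum f k + f k end.

(* lambda^*(B) < eps : B is covered by countably many half-open rectangles
   [a_k,b_k) x [c_k,d_k) of total area <= eps' < eps. *)
Definition outer_lt (B : set2) (eps : R) : Prop :=
  exists (ra rb rc rd : nat -> R) (eps' : R),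
    eps' < eps /\
    (forall k, ra k <= rb k /\ rc k <= rd k) /\
    (forall z, B z -> exists k, ra k <= fst z < rb k /\ rc k <= snd z < rd k) /\
    (forall N, psum (fun k => (rb k - ra k) * (rd k - rc k)) N <= eps').

Definition null2 (B : set2) : Prop := forall eps, 0 < eps -> outer_lt B eps.

Definition open2 (U : set2) : Prop :=
  forall z, U z -> exists r, 0 < r /\
    forall z', Rabs (fst z' - fst z) < r -> Rabs (snd z' - snd z) < r -> U z'.

(* Lebesgue measurability: outer regularity by open sets. *)
Definition measurable2 (A : set2) : Prop :=
  forall eps, 0 < eps -> exists U, open2 U /\ (forall z, A z -> U z) /\
    outer_lt (fun z => U z /\ ~ A z) eps.

(* Conservativity of S on (X x X, mu x mu), mu = Lebesgue restricted to X. *)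
Definition conservative2 (X : R -> Prop) (S : R * R -> R * R) : Prop :=
  forall A : set2, (forall z, A z -> X (fst z) /\ X (snd z)) ->
    measurable2 A -> ~ null2 A ->
    exists n : nat, (1 <= n)%nat /\
      ~ null2 (fun z => A (Nat.iter n S z) /\ A z).

Definition prodmap (f g : R -> R) (z : R * R) : R * R := (f (fst z), g (snd z)).

(* Level i of the column G_n is a cell of the grid of mesh [width n] = 4^-n,
   numbered by its label; the four copies of G_N stacked in G_(N+1) split each
   cell m of G_N into its quarter-cells 4m, 4m+1, 4m+2, 4m+3.  Climbing from
   copy s to copy s+1 takes p_N steps of T for s = 0 and q_N steps for s = 2,
   and translates by one width w = 4^-(N+1).  So if p_N = k p and q_N = k q,
   the k-th power of T^p x T^q translates the square cell (4m1, 4m2+2) by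
   (w, w) into the square (4m1+1, 4m2+3) of the same cell (m1, m2) of the
   plane; likewise T^-p x T^q translates (4m1+1, 4m2+2) by (-w, w).

   On the measure side, a density argument gives, for measurable non-null
   A in X x X, a grid cell where A misses outer measure < 1/64 of the area,
   and this persists in a subcell at every later stage, in particular at a
   stage N with p_N = k p and q_N = k q.  There a square and its translate
   both lie in the cell, so A and S^-k A cannot both miss most of the square. *)

From Pilot Require Import Defs.
From Stdlib Require Import Reals Lra Lia Arith List ClassicalEpsilon Classical Cantor FinFun.
From mathcomp Require all_boot all_order all_algebra.
From mathcomp Require all_classical all_reals all_analysis Rstruct Rstruct_topology.
Open Scope R_scope.
Set Bullet Behavior "Strict Subproofs".

Lemma width_S n : width n = 4 * width (S n).
Proof. unfold width. simpl. field. Qed.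

Lemma width_pos n : 0 < width n.
Proof. unfold width. apply pow_lt. lra. Qed.

Lemma width_pow t k : width t = INR (4 ^ k) * width (t + k).
Proof.
  induction k as [|k IH].
  - rewrite Nat.add_0_r. simpl. ring.
  - rewrite IH, Nat.add_succ_r, (width_S (t + k)), Nat.pow_succ_r', mult_INR.
    simpl INR. ring.
Qed.

Definition in_cell (w : R) (m : nat) (x : R) : Prop := INR m * w <= x < INR m * w + w.

Lemma in_cell_unique w m m' x : 0 < w -> in_cell w m x -> in_cell w m' x -> m = m'.
Proof.
  unfold in_cell. intros Hw Hm Hm'.
  assert (Hstep : forall u v, (u < v)%nat -> INR u * w + w <= INR v * w).
  { intros u v Huv. apply le_INR in Huv. rewrite S_INR in Huv. nra. }
  destruct (lt_eq_lt_dec m m') as [[Hlt|Heq]|Hlt]; auto;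
    apply Hstep in Hlt; lra.
Qed.

Lemma in_cell_next w m j x : in_cell w (m + j) x -> in_cell w (m + S j) (x + w).
Proof. unfold in_cell. rewrite Nat.add_succ_r, S_INR. lra. Qed.

Lemma in_cell_prev w m j x : in_cell w (m + S j) x -> in_cell w (m + j) (x - w).
Proof. unfold in_cell. rewrite Nat.add_succ_r, S_INR. lra. Qed.

Lemma in_cell_parent w m j x : 0 < w -> (j < 4)%nat ->
  in_cell w (4 * m + j) x -> in_cell (4 * w) m x.
Proof.
  unfold in_cell. intros Hw Hj. rewrite plus_INR, mult_INR. simpl INR.
  assert (0 <= INR j) by apply pos_INR.
  assert (INR j <= 3) by (replace 3 with (INR 3) by (simpl; ring); apply le_INR; lia).
  split; nra.
Qed.

Lemma in_cell_child w m x : 0 < w -> in_cell (4 * w) m x ->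
  exists j, (j < 4)%nat /\ in_cell w (4 * m + j) x.
Proof.
  unfold in_cell. intros Hw Hx.
  assert (G : forall j, (j < 4)%nat -> INR m * (4 * w) + INR j * w <= x <
                INR m * (4 * w) + INR j * w + w -> exists j, (j < 4)%nat /\
                INR (4 * m + j) * w <= x < INR (4 * m + j) * w + w).
  { intros j Hj Hxj. exists j. split; [exact Hj|].
    rewrite plus_INR, mult_INR. simpl INR. lra. }
  destruct (Rlt_le_dec x (INR m * (4 * w) + 1 * w)); [apply (G 0%nat); [lia|]; simpl INR; lra|].
  destruct (Rlt_le_dec x (INR m * (4 * w) + 2 * w)); [apply (G 1%nat); [lia|]; simpl INR; lra|].
  destruct (Rlt_le_dec x (INR m * (4 * w) + 3 * w)); [apply (G 2%nat); [lia|]; simpl INR; lra|].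
  apply (G 3%nat); [lia|]; simpl INR; lra.
Qed.

Lemma in_cell_nest K w m m' x x' : 0 < w ->
  in_cell (INR K * w) m x -> in_cell w m' x -> in_cell w m' x' ->
  in_cell (INR K * w) m x'.
Proof.
  unfold in_cell. intros Hw H1 H2 H3.
  assert (A1 : INR m' < INR (m * K + K)).
  { rewrite plus_INR, mult_INR. apply Rmult_lt_reg_r with w; [exact Hw|]. nra. }
  assert (A2 : INR (m * K) < INR (m' + 1)).
  { rewrite plus_INR, mult_INR. simpl INR. apply Rmult_lt_reg_r with w; [exact Hw|]. nra. }
  apply INR_lt in A1. apply INR_lt in A2.
  assert (B1 : INR (m * K) <= INR m') by (apply le_INR; lia).
  assert (B2 : INR (m' + 1) <= INR (m * K + K)) by (apply le_INR; lia).
  rewrite mult_INR in B1. rewrite !plus_INR, mult_INR in B2. simpl INR in B2.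
  assert (INR m * INR K * w <= INR m' * w) by (apply Rmult_le_compat_r; lra).
  assert ((INR m' + 1) * w <= (INR m * INR K + INR K) * w) by (apply Rmult_le_compat_r; lra).
  split; nra.
Qed.

Lemma seq_as_shift s cnt : seq s cnt = map (fun j => (s + j)%nat) (seq 0 cnt).
Proof.
  revert s. induction cnt as [|cnt IH]; intro s; [reflexivity|].
  simpl. f_equal; [lia|]. rewrite IH, <- seq_shift, map_map.
  apply map_ext. intro; lia.
Qed.

Lemma nth_map_nat (f : nat -> nat) l i :
  (i < length l)%nat -> nth i (map f l) 0%nat = f (nth i l 0%nat).
Proof.
  intro Hi. rewrite nth_indep with (d' := f 0%nat) by (rewrite length_map; lia).
  apply map_nth.
Qed.

Definition eventually_labelled (H : nat -> nat) (x : R) : Prop :=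
  exists n0, forall t, (n0 <= t)%nat -> exists m, (m < H t)%nat /\ in_cell (width t) m x.

Section Column.

Variables a b c d : nat -> nat.

Local Notation H := (Hc a b c d).

(* Every level of [G_n] is a cell of the grid of mesh [width n]; [labels n]
   lists the numbers of these cells, bottom to top.  The recursion mirrors
   [col]: four copies of [G_k] (cell m splits into cells 4m,...,4m+3)
   interleaved with fresh spacer cells numbered from [4 H_k] on. *)
Fixpoint labels (n : nat) : list nat :=
  match n with
  | O => 0%nat :: nil
  | S k => let l := labels k in let h := H k in
     (map (fun m => 4 * m) l ++ seq (4 * h) (a k)
      ++ map (fun m => 4 * m + 1) l ++ seq (4 * h + a k) (b k)
      ++ map (fun m => 4 * m + 2) l ++ seq (4 * h + a k + b k) (c k)
      ++ map (fun m => 4 * m + 3) l ++ seq (4 * h + a k + b k + c k) (d k))%nat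
  end.

Lemma spacers_labels (s : nat) w cnt :
  spacers (INR s * w) w cnt = map (fun m => INR m * w) (seq s cnt).
Proof.
  unfold spacers. rewrite (seq_as_shift s), map_map. apply map_ext.
  intro j. rewrite plus_INR. ring.
Qed.

Lemma copy_labels (l : list nat) k (j : nat) :
  map (fun x => x + INR j * width (S k)) (map (fun m => INR m * width k) l)
  = map (fun m => INR m * width (S k)) (map (fun m => 4 * m + j)%nat l).
Proof.
  rewrite !map_map. apply map_ext. intro m. rewrite (width_S k).
  rewrite plus_INR, mult_INR. simpl INR. ring.
Qed.

Lemma col_labels n :
  fst (col a b c d n) = map (fun m => INR m * width n) (labels n) /\
  snd (col a b c d n) = INR (H n) * width n.
Proof.
  induction n as [|k [IH1 IH2]].
  - simpl. unfold width. simpl. split; [f_equal; ring | ring].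
  - cbn [col]. destruct (col a b c d k) as [ls r]. cbn [fst snd] in IH1, IH2 |- *.
    subst ls r. cbn [labels Hc]. set (h := H k).
    assert (Hr : INR h * width k = INR (4 * h) * width (S k)).
    { rewrite (width_S k), mult_INR. simpl INR. ring. }
    assert (Hs : forall u, INR (4 * h) * width (S k) + INR u * width (S k)
                         = INR (4 * h + u) * width (S k)).
    { intro u. rewrite plus_INR. ring. }
    rewrite Hr, !Hs, <- !Nat.add_assoc. split.
    + rewrite !map_app, !spacers_labels, !copy_labels, !Nat.add_assoc.
      do 2 f_equal. apply map_ext. intro; lia.
    + rewrite !plus_INR, mult_INR. simpl INR. ring.
Qed.

Lemma labels_length n : length (labels n) = H n.
Proof.
  induction n as [|k IH]; [reflexivity|].
  cbn [labels Hc]. rewrite !length_app, !length_map, !length_seq, IH. lia.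
Qed.

Ltac labels_membership :=
  repeat match goal with
  | Hm : In _ (_ ++ _) |- _ => apply in_app_or in Hm; destruct Hm as [Hm|Hm]
  | Hm : In _ (map _ _) |- _ => apply in_map_iff in Hm; destruct Hm as [? [? Hm]]
  | Hm : In _ (seq _ _) |- _ => apply in_seq in Hm
  end.

Lemma labels_NoDup_bounded n :
  NoDup (labels n) /\ (forall m, In m (labels n) -> (m < H n)%nat).
Proof.
  induction n as [|k [IHn IHb]].
  - split; [repeat constructor; simpl; tauto|]. intros m [Hm|[]]; simpl; lia.
  - cbn [labels Hc].
    split.
    + repeat apply NoDup_app;
        try (apply Injective_map_NoDup; [intros ? ? ?; lia | exact IHn]);
        try apply seq_NoDup;
        intros m H1 H2; labels_membership; subst;
        repeat match goal with Hh : In ?x (labels k) |- _ => apply IHb in Hh end; lia.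
    + intros m Hm. labels_membership; subst;
        repeat match goal with Hh : In ?x (labels k) |- _ => apply IHb in Hh end; lia.
Qed.

Lemma In_labels n m : In m (labels n) <-> (m < H n)%nat.
Proof.
  destruct (labels_NoDup_bounded n) as [Hnd Hb]. split; [apply Hb|]. intro Hm.
  assert (Hincl : incl (seq 0 (H n)) (labels n)).
  { apply NoDup_length_incl; [exact Hnd | rewrite length_seq, labels_length; lia |].
    intros x Hx. apply in_seq. split; [lia|]. apply Hb in Hx. lia. }
  apply Hincl, in_seq. lia.
Qed.

(* Index, inside [G_(k+1)], of the bottom of the s-th copy of [G_k] (s < 4). *)
Definition off (k s : nat) : nat :=
  match s with
  | O => O
  | 1 => H k + a k
  | 2 => 2 * H k + a k + b k
  | _ => 3 * H k + a k + b k + c k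
  end.

Lemma off_bound k s i : (s < 4)%nat -> (i < H k)%nat -> (off k s + i < H (S k))%nat.
Proof. intros Hs Hi. unfold off. cbn [Hc]. destruct s as [|[|[|[|s]]]]; lia. Qed.

Lemma labels_off k s i : (s < 4)%nat -> (i < H k)%nat ->
  nth (off k s + i) (labels (S k)) 0%nat = (4 * nth i (labels k) 0%nat + s)%nat.
Proof.
  intros Hs Hi. pose proof (labels_length k) as HL.
  unfold off. cbn [labels]. set (h := H k) in *. set (l := labels k) in *.
  destruct s as [|[|[|[|s]]]]; [ | | | | lia].
  - rewrite Nat.add_0_l, app_nth1 by (rewrite length_map; lia).
    rewrite nth_map_nat by lia. lia.
  - replace (h + a k + i)%nat with
      (length (map (fun m => 4 * m)%nat l) + (length (seq (4 * h) (a k)) + i))%nat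
      by (rewrite length_map, length_seq; lia).
    rewrite !app_nth2_plus, app_nth1 by (rewrite length_map; lia).
    rewrite nth_map_nat by lia. reflexivity.
  - replace (2 * h + a k + b k + i)%nat with
      (length (map (fun m => 4 * m)%nat l) + (length (seq (4 * h) (a k)) +
      (length (map (fun m => 4 * m + 1)%nat l) + (length (seq (4 * h + a k) (b k)) + i))))%nat
      by (rewrite !length_map, !length_seq; lia).
    rewrite !app_nth2_plus, app_nth1 by (rewrite length_map; lia).
    rewrite nth_map_nat by lia. reflexivity.
  - replace (3 * h + a k + b k + c k + i)%nat with
      (length (map (fun m => 4 * m)%nat l) + (length (seq (4 * h) (a k)) +
      (length (map (fun m => 4 * m + 1)%nat l) + (length (seq (4 * h + a k) (b k)) +
      (length (map (fun m => 4 * m + 2)%nat l) +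
       (length (seq (4 * h + a k + b k) (c k)) + i))))))%nat
      by (rewrite !length_map, !length_seq; lia).
    rewrite !app_nth2_plus, app_nth1 by (rewrite length_map; lia).
    rewrite nth_map_nat by lia. reflexivity.
Qed.

Definition base (n i : nat) : R := nth i (levels a b c d n) 0.

Lemma levels_labels n : levels a b c d n = map (fun m => INR m * width n) (labels n).
Proof. apply (col_labels n). Qed.

Lemma levels_length n : length (levels a b c d n) = H n.
Proof. rewrite levels_labels, length_map. apply labels_length. Qed.

Lemma base_label n i : (i < H n)%nat -> base n i = INR (nth i (labels n) 0%nat) * width n.
Proof.
  intro Hi. unfold base. rewrite levels_labels.
  rewrite nth_indep with (d' := INR 0 * width n) by (rewrite length_map, labels_length; lia).
  apply (map_nth (fun m => INR m * width n)).
Qed.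

Lemma in_level_iff n i x :
  in_level a b c d n i x <-> (i < H n)%nat /\ base n i <= x < base n i + width n.
Proof. unfold in_level. rewrite levels_length. fold (base n i). tauto. Qed.

Lemma in_level_cell n i x : (i < H n)%nat ->
  in_level a b c d n i x <-> in_cell (width n) (nth i (labels n) 0%nat) x.
Proof.
  intro Hi. rewrite in_level_iff, base_label by exact Hi. unfold in_cell. tauto.
Qed.

Lemma level_unique n i j x : in_level a b c d n i x -> in_level a b c d n j x -> i = j.
Proof.
  intros Hx Hy.
  assert (Hi : (i < H n)%nat) by (apply in_level_iff in Hx; tauto).
  assert (Hj : (j < H n)%nat) by (apply in_level_iff in Hy; tauto).
  apply in_level_cell in Hx, Hy; [|assumption..].
  pose proof (in_cell_unique _ _ _ _ (width_pos n) Hx Hy) as E.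
  destruct (labels_NoDup_bounded n) as [Hnd _].
  apply (proj1 (NoDup_nth (labels n) 0%nat) Hnd); rewrite ?labels_length; assumption.
Qed.

Lemma base_off k s i : (s < 4)%nat -> (i < H k)%nat ->
  base (S k) (off k s + i) = base k i + INR s * width (S k).
Proof.
  intros Hs Hi. rewrite base_label by (apply off_bound; assumption).
  rewrite labels_off, base_label by assumption.
  rewrite (width_S k), plus_INR, mult_INR. simpl INR. ring.
Qed.

Lemma descent k i x : in_level a b c d k i x ->
  exists s, (s < 4)%nat /\ in_level a b c d (S k) (off k s + i) x.
Proof.
  intro Hx. assert (Hi : (i < H k)%nat) by (apply in_level_iff in Hx; tauto).
  apply in_level_cell in Hx; [|exact Hi]. rewrite (width_S k) in Hx.
  destruct (in_cell_child _ _ _ (width_pos (S k)) Hx) as [s [Hs Hxs]].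
  exists s. split; [exact Hs|].
  apply in_level_cell; [apply off_bound; assumption|].
  rewrite labels_off by assumption. exact Hxs.
Qed.

Lemma descent_iter dd : forall n i x, in_level a b c d n i x ->
  exists j, in_level a b c d (n + dd) j x.
Proof.
  induction dd as [|dd IH]; intros n i x Hx.
  - exists i. rewrite Nat.add_0_r. exact Hx.
  - destruct (descent _ _ _ Hx) as [s [_ Hz]].
    rewrite Nat.add_succ_r, <- Nat.add_succ_l. exact (IH _ _ _ Hz).
Qed.

Lemma refine dd : forall n i j t x,
  in_level a b c d n i x -> in_level a b c d (n + dd) j x -> (i + t < H n)%nat ->
  (j + t < H (n + dd))%nat /\
  base (n + dd) (j + t) - base (n + dd) j = base n (i + t) - base n i.
Proof.
  induction dd as [|dd IH]; intros n i j t x Hx Hy Ht.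
  - rewrite Nat.add_0_r in *. pose proof (level_unique _ _ _ _ Hx Hy). subst. auto.
  - destruct (descent _ _ _ Hx) as [s [Hs Hz]].
    rewrite Nat.add_succ_r, <- Nat.add_succ_l in *.
    assert (Hi : (i < H n)%nat) by lia.
    destruct (IH (S n) (off n s + i)%nat j t x Hz Hy) as [H1 H2].
    { rewrite <- Nat.add_assoc. apply off_bound; auto. }
    split; [exact H1|]. rewrite H2, <- Nat.add_assoc, !base_off by (auto; lia). ring.
Qed.

Lemma level_shift n i j x : in_level a b c d n i x -> (j < H n)%nat ->
  in_level a b c d n j (x - base n i + base n j).
Proof. rewrite !in_level_iff. intros [Hi Hx] Hj. split; [exact Hj | lra]. Qed.

Local Notation T := (Tmap a b c d).
Local Notation Tinv := (Tinv a b c d).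

Lemma Tgraph_levels x y : Tgraph a b c d x y <->
  exists n i, (S i < H n)%nat /\ in_level a b c d n i x /\ y = x - base n i + base n (S i).
Proof.
  unfold Tgraph, base.
  split; intros [n [i Hni]]; exists n, i; rewrite levels_length in *; exact Hni.
Qed.

Lemma Tgraph_functional_le x n1 i1 n2 i2 : (n1 <= n2)%nat ->
  (S i1 < H n1)%nat -> in_level a b c d n1 i1 x ->
  in_level a b c d n2 i2 x -> (S i2 < H n2)%nat ->
  x - base n1 i1 + base n1 (S i1) = x - base n2 i2 + base n2 (S i2).
Proof.
  intros Hle H1 Hx1 Hx2 H2. replace n2 with (n1 + (n2 - n1))%nat in * by lia.
  destruct (refine (n2 - n1) n1 i1 i2 1 x Hx1 Hx2) as [_ E]; [lia|].
  rewrite !Nat.add_1_r in E. lra.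
Qed.

Lemma Tgraph_functional x y1 y2 : Tgraph a b c d x y1 -> Tgraph a b c d x y2 -> y1 = y2.
Proof.
  rewrite !Tgraph_levels. intros [n1 [i1 [H1 [Hx1 E1]]]] [n2 [i2 [H2 [Hx2 E2]]]]. subst.
  destruct (Nat.le_ge_cases n1 n2).
  - apply Tgraph_functional_le; assumption.
  - symmetry. apply Tgraph_functional_le; assumption.
Qed.

Lemma Tgraph_injective_le x1 x2 n1 i1 n2 i2 : (n1 <= n2)%nat ->
  (S i1 < H n1)%nat -> in_level a b c d n1 i1 x1 ->
  (S i2 < H n2)%nat -> in_level a b c d n2 i2 x2 ->
  x1 - base n1 i1 + base n1 (S i1) = x2 - base n2 i2 + base n2 (S i2) -> x1 = x2.
Proof.
  intros Hle H1 Hx1 H2 Hx2 E. replace n2 with (n1 + (n2 - n1))%nat in * by lia.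
  set (m := (n1 + (n2 - n1))%nat) in *.
  destruct (descent_iter (n2 - n1) n1 i1 x1 Hx1) as [j Hj]. fold m in Hj.
  destruct (refine (n2 - n1) n1 i1 j 1 x1 Hx1 Hj) as [Hb E']; [lia|].
  fold m in Hb, E'. rewrite Nat.add_1_r in Hb. rewrite !Nat.add_1_r in E'.
  assert (Hy1 : in_level a b c d m (S j) (x1 - base m j + base m (S j)))
    by (apply level_shift; assumption).
  assert (Hy2 : in_level a b c d m (S i2) (x2 - base m i2 + base m (S i2)))
    by (apply level_shift; assumption).
  replace (x1 - base m j + base m (S j)) with (x2 - base m i2 + base m (S i2)) in Hy1 by lra.
  pose proof (level_unique _ _ _ _ Hy1 Hy2) as Ej. injection Ej as Ej. subst j. lra.
Qed.

Lemma Tgraph_injective x1 x2 y : Tgraph a b c d x1 y -> Tgraph a b c d x2 y -> x1 = x2.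
Proof.
  rewrite !Tgraph_levels. intros [n1 [i1 [H1 [Hx1 E1]]]] [n2 [i2 [H2 [Hx2 E2]]]].
  destruct (Nat.le_ge_cases n1 n2).
  - apply (Tgraph_injective_le x1 x2 n1 i1 n2 i2); auto. congruence.
  - symmetry. apply (Tgraph_injective_le x2 x1 n2 i2 n1 i1); auto. congruence.
Qed.

Lemma Tmap_spec x y : Tgraph a b c d x y -> T x = y.
Proof.
  intro Hxy. unfold Tmap.
  destruct (epsilon_spec (inhabits 0) (fun y => Tgraph a b c d x y \/
     (~ (exists z, Tgraph a b c d x z) /\ y = x))) as [H1|[H1 _]].
  - exists y. left. exact Hxy.
  - exact (Tgraph_functional _ _ _ H1 Hxy).
  - exfalso. apply H1. exists y. exact Hxy.
Qed.

Lemma Tinv_spec x y : Tgraph a b c d x y -> Tinv y = x.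
Proof.
  intro Hxy. unfold Defs.Tinv.
  destruct (epsilon_spec (inhabits 0) (fun x => Tgraph a b c d x y \/
     (~ (exists z, Tgraph a b c d z y) /\ x = y))) as [H1|[H1 _]].
  - exists x. left. exact Hxy.
  - exact (Tgraph_injective _ _ _ H1 Hxy).
  - exfalso. apply H1. exists x. exact Hxy.
Qed.

Lemma iter_T_level n i x t : in_level a b c d n i x -> (i + t < H n)%nat ->
  Nat.iter t T x = x - base n i + base n (i + t).
Proof.
  intros Hx. induction t as [|t IH]; intro Ht.
  - simpl. rewrite Nat.add_0_r. ring.
  - rewrite Nat.iter_succ, IH by lia. apply Tmap_spec, Tgraph_levels.
    exists n, (i + t)%nat. split; [lia|]. split.
    + apply level_shift; [exact Hx | lia].
    + rewrite Nat.add_succ_r. ring.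
Qed.

Lemma iter_Tinv_level n j y t : in_level a b c d n j y -> (t <= j)%nat ->
  Nat.iter t Tinv y = y - base n j + base n (j - t).
Proof.
  intros Hy. assert (Hj : (j < H n)%nat) by (apply in_level_iff in Hy; tauto).
  induction t as [|t IH]; intro Ht.
  - simpl. rewrite Nat.sub_0_r. ring.
  - rewrite Nat.iter_succ, IH by lia. apply Tinv_spec, Tgraph_levels.
    exists n, (j - S t)%nat. split; [lia|]. split.
    + apply level_shift; [exact Hy | lia].
    + replace (S (j - S t)) with (j - t)%nat by lia. ring.
Qed.

Lemma level_of_subcell N m s x : (m < H N)%nat -> (s < 4)%nat ->
  in_cell (width (S N)) (4 * m + s) x ->
  exists i, (i < H N)%nat /\ in_level a b c d (S N) (off N s + i) x.
Proof.
  intros Hm Hs Hx. apply In_labels in Hm.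
  destruct (In_nth _ _ 0%nat Hm) as [i [Hi Ei]]. rewrite labels_length in Hi.
  exists i. split; [exact Hi|].
  apply in_level_cell; [apply off_bound; assumption|].
  rewrite labels_off, Ei by assumption. exact Hx.
Qed.

Lemma off_le_succ N s : (off N s <= off N (S s))%nat.
Proof. unfold off. destruct s as [|[|[|s]]]; lia. Qed.

Lemma iter_T_next_copy N m s x : (m < H N)%nat -> (s < 3)%nat ->
  in_cell (width (S N)) (4 * m + s) x ->
  Nat.iter (off N (S s) - off N s) T x = x + width (S N).
Proof.
  intros Hm Hs Hx. destruct (level_of_subcell N m s x Hm ltac:(lia) Hx) as [i [Hi Hl]].
  pose proof (off_le_succ N s).
  assert (Hidx : (off N s + i + (off N (S s) - off N s) = off N (S s) + i)%nat) by lia.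
  rewrite (iter_T_level _ _ _ _ Hl); rewrite Hidx; [|apply off_bound; lia].
  rewrite !base_off by (lia || assumption). rewrite S_INR. ring.
Qed.

Lemma iter_Tinv_prev_copy N m s x : (m < H N)%nat -> (s < 3)%nat ->
  in_cell (width (S N)) (4 * m + S s) x ->
  Nat.iter (off N (S s) - off N s) Tinv x = x - width (S N).
Proof.
  intros Hm Hs Hx. destruct (level_of_subcell N m (S s) x Hm ltac:(lia) Hx) as [i [Hi Hl]].
  pose proof (off_le_succ N s).
  rewrite (iter_Tinv_level _ _ _ _ Hl) by lia.
  replace (off N (S s) + i - (off N (S s) - off N s))%nat with (off N s + i)%nat by lia.
  rewrite !base_off by (lia || assumption). rewrite S_INR. ring.
Qed.

Lemma pp_off N : pp a b c d N = (off N 1 - off N 0)%nat.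
Proof. unfold pp, off. lia. Qed.

Lemma qq_off N : qq a b c d N = (off N 3 - off N 2)%nat.
Proof. unfold qq, off. lia. Qed.

Lemma Xspace_labelled x : Xspace a b c d x -> eventually_labelled H x.
Proof.
  intros [n [i Hx]]. exists n. intros t Ht.
  destruct (descent_iter (t - n) n i x Hx) as [j Hj].
  replace (n + (t - n))%nat with t in Hj by lia.
  assert (Hjt : (j < H t)%nat) by (apply in_level_iff in Hj; tauto).
  exists (nth j (labels t) 0%nat). split.
  - apply In_labels, nth_In. rewrite labels_length. exact Hjt.
  - apply in_level_cell; assumption.
Qed.

End Column.

Definition sumL {A : Type} (f : A -> R) (l : list A) : R :=
  fold_right (fun x acc => f x + acc) 0 l.

Lemma psum_ext f g N : (forall k, f k = g k) -> psum f N = psum g N.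
Proof. intro H. induction N; simpl; [reflexivity|]. rewrite IHN, H. reflexivity. Qed.

Lemma psum_le f g N : (forall k, f k <= g k) -> psum f N <= psum g N.
Proof. intro H. induction N; simpl; [lra|]. specialize (H N). lra. Qed.

Lemma psum_mono f N M : (forall k, 0 <= f k) -> (N <= M)%nat -> psum f N <= psum f M.
Proof. intros H HNM. induction HNM; [lra|]. simpl. specialize (H m). lra. Qed.

Lemma psum_sumL_swap (F : nat -> nat -> R) G N :
  sumL (fun j => psum (F j) N) G = psum (fun k => sumL (fun j => F j k) G) N.
Proof.
  induction G as [|j G IH]; simpl.
  - induction N; simpl; [reflexivity|]. rewrite <- IHN. ring.
  - rewrite IH. clear IH. induction N; simpl; [ring|]. rewrite <- IHN. ring.
Qed.

Lemma sumL_le {A} (f g : A -> R) G :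
  (forall j, In j G -> f j <= g j) -> sumL f G <= sumL g G.
Proof.
  induction G as [|j G IH]; intro H; simpl; [lra|].
  assert (f j <= g j) by (apply H; left; reflexivity).
  assert (sumL f G <= sumL g G) by (apply IH; intros; apply H; right; assumption). lra.
Qed.

Lemma sumL_app {A} (f : A -> R) l1 l2 : sumL f (l1 ++ l2) = sumL f l1 + sumL f l2.
Proof. induction l1; simpl; [ring|]. rewrite IHl1. ring. Qed.

Lemma sumL_const (c : R) (l : list nat) : sumL (fun _ => c) l = INR (length l) * c.
Proof.
  induction l as [|x l IH]; simpl sumL; [simpl; ring|].
  rewrite IH. simpl length. rewrite S_INR. ring.
Qed.

Lemma sumL_scale {A} (f : A -> R) c l : sumL (fun j => c * f j) l = c * sumL f l.
Proof. induction l; simpl; [ring|]. rewrite IHl. ring. Qed.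

Lemma psum_seq f N : psum f N = sumL f (seq 0 N).
Proof.
  induction N as [|N IH]; [reflexivity|].
  rewrite seq_S, sumL_app, <- IH. simpl. ring.
Qed.

Lemma psum_interleave (f g : nat -> R) N :
  psum (fun k => if Nat.even k then f (Nat.div2 k) else g (Nat.div2 k)) (2 * N)
  = psum f N + psum g N.
Proof.
  induction N as [|N IH]; [simpl; ring|].
  replace (2 * S N)%nat with (S (S (2 * N))) by lia. cbn [psum]. rewrite IH.
  rewrite Nat.even_succ, Nat.odd_mul, Nat.even_mul, Nat.div2_double,
    Nat.div2_succ_double. simpl. ring.
Qed.

Lemma not_outer_lt0 E : ~ outer_lt E 0.
Proof. intros [ra [rb [rc [rd [e [He [_ [_ Hp]]]]]]]]. specialize (Hp O). simpl in Hp. lra. Qed.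

Lemma outer_mono (E F : set2) e : (forall z, E z -> F z) -> outer_lt F e -> outer_lt E e.
Proof.
  intros H [ra [rb [rc [rd [e' [He [Hr [Hc Hp]]]]]]]].
  exists ra, rb, rc, rd, e'. split; [exact He|]. split; [exact Hr|]. split; [|exact Hp].
  intros z Hz. exact (Hc z (H z Hz)).
Qed.

Lemma outer_translate (E : set2) e u v : outer_lt E e ->
  outer_lt (fun z => E (fst z + u, snd z + v)) e.
Proof.
  intros [ra [rb [rc [rd [e' [He [Hr [Hc Hp]]]]]]]].
  exists (fun k => ra k - u), (fun k => rb k - u), (fun k => rc k - v), (fun k => rd k - v), e'.
  split; [exact He|]. split; [intro k; specialize (Hr k); lra|]. split.
  - intros z Hz. destruct (Hc _ Hz) as [k Hk]. simpl in Hk. exists k. lra.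
  - intro N. rewrite (psum_ext _ (fun k => (rb k - ra k) * (rd k - rc k))); [apply Hp|].
    intro k. ring.
Qed.

(* Subadditivity: interleave the two covers. *)
Lemma outer_union2 (E F : set2) e1 e2 : outer_lt E e1 -> outer_lt F e2 ->
  outer_lt (fun z => E z \/ F z) (e1 + e2).
Proof.
  intros [ra [rb [rc [rd [e' [He [Hr [Hc Hp]]]]]]]]
         [sa [sb [sc [sd [f' [Hf [Hs [Hd Hq]]]]]]]].
  pose (sel (A B : nat -> R) k := if Nat.even k then A (Nat.div2 k) else B (Nat.div2 k)).
  assert (Heven : forall k, Nat.even (2 * k) = true /\ Nat.div2 (2 * k) = k)
    by (intro k; rewrite Nat.even_mul, Nat.div2_double; auto).
  assert (Hodd : forall k, Nat.even (S (2 * k)) = false /\ Nat.div2 (S (2 * k)) = k)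
    by (intro k; rewrite Nat.even_succ, Nat.odd_mul, Nat.div2_succ_double; auto).
  exists (sel ra sa), (sel rb sb), (sel rc sc), (sel rd sd), (e' + f').
  split; [lra|]. split; [intro k; unfold sel; destruct (Nat.even k); auto|]. split.
  - intros z [Hz|Hz].
    + destruct (Hc _ Hz) as [k Hk]. exists (2 * k)%nat. unfold sel.
      destruct (Heven k) as [-> ->]. exact Hk.
    + destruct (Hd _ Hz) as [k Hk]. exists (S (2 * k)). unfold sel.
      destruct (Hodd k) as [-> ->]. exact Hk.
  - intro N. set (area := fun k => (sel rb sb k - sel ra sa k) * (sel rd sd k - sel rc sc k)).
    assert (Hnn : forall k, 0 <= area k).
    { intro k. unfold area, sel. destruct (Nat.even k);
        [destruct (Hr (Nat.div2 k))|destruct (Hs (Nat.div2 k))]; apply Rmult_le_pos; lra. }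
    apply Rle_trans with (psum area (2 * N)); [apply psum_mono; [exact Hnn | lia]|].
    unfold area, sel.
    rewrite (psum_ext _ (fun k => if Nat.even k
        then (fun k => (rb k - ra k) * (rd k - rc k)) (Nat.div2 k)
        else (fun k => (sb k - sa k) * (sd k - sc k)) (Nat.div2 k)))
      by (intro k; destruct (Nat.even k); reflexivity).
    rewrite (psum_interleave (fun k => (rb k - ra k) * (rd k - rc k))
                             (fun k => (sb k - sa k) * (sd k - sc k)) N).
    specialize (Hp N). specialize (Hq N). lra.
Qed.

Module RectangleMeasure.
Import all_boot all_order all_algebra all_classical all_reals all_analysis.
Import Rstruct Rstruct_topology.
Import Order.TTheory GRing.Theory Num.Theory.
Local Open Scope classical_set_scope.
Local Open Scope ereal_scope.

Lemma psumE f N : (\sum_(0 <= k < N) (f k)%:E) = (psum f N)%:E.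
Proof. elim: N => [|N IH]; first by rewrite big_geq. by rewrite big_nat_recr //= IH -EFinD. Qed.

Lemma lebesgue_itv (x y : R) : (x <= y)%R -> (@lebesgue_measure R) `[x, y[ = (y - x)%:E.
Proof.
move=> xy; rewrite lebesgue_measure_itv /= lte_fin.
by case: ltgtP xy => // -> _; rewrite subrr.
Qed.

Lemma lebesgue_rect (x y u v : R) : (x <= y)%R -> (u <= v)%R ->
  ((@lebesgue_measure R) \x (@lebesgue_measure R)) (`[x, y[ `*` `[u, v[)
  = ((y - x) * (v - u))%:E.
Proof.
move=> h1 h2; rewrite product_measure1E //.
by rewrite EFinM; congr (_ * _); apply: lebesgue_itv.
Qed.

Definition rect (x y u v : R) : set (measurableTypeR R * measurableTypeR R)%type := `[x, y[ `*` `[u, v[.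

Lemma rect_measurable x y u v : measurable (rect x y u v).
Proof. by apply: measurableX; apply: measurable_itv. Qed.

Lemma in_rect x y u v (z : R * R) :
  rect x y u v z <-> Rle x z.1 /\ Rlt z.1 y /\ Rle u z.2 /\ Rlt z.2 v.
Proof.
rewrite /rect /= !in_itv /=; split.
- by move=> [/andP [/RleP h1 /RltP h2] /andP [/RleP h3 /RltP h4]].
- move=> [h1 [h2 [h3 h4]]].
  by split; apply/andP; split; first [apply/RleP | apply/RltP].
Qed.

Lemma rect_area x y u v : Rle x y -> Rle u v ->
  ((@lebesgue_measure R) \x (@lebesgue_measure R)) (rect x y u v) = ((y - x) * (v - u))%:E.
Proof. by move=> /RleP h1 /RleP h2; apply: lebesgue_rect. Qed.

Lemma rect_area_le_cover (a b c d e : R) (ra rb rc rd : nat -> R) :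
  Rle a b -> Rle c d ->
  (forall k, Rle (ra k) (rb k) /\ Rle (rc k) (rd k)) ->
  (forall x y, Rle a x -> Rlt x b -> Rle c y -> Rlt y d -> exists k,
     Rle (ra k) x /\ Rlt x (rb k) /\ Rle (rc k) y /\ Rlt y (rd k)) ->
  (forall N, Rle (psum (fun k => Rmult (Rminus (rb k) (ra k)) (Rminus (rd k) (rc k))) N) e) ->
  Rle (Rmult (Rminus b a) (Rminus d c)) e.
Proof.
move=> hab hcd hr hcov hps.
set P := ((@lebesgue_measure R) \x (@lebesgue_measure R)).
have Hsub : P (rect a b c d) <= \sum_(0 <= n <oo) P (rect (ra n) (rb n) (rc n) (rd n)).
  apply: measure_sigma_subadditive => [n||]; try exact: rect_measurable.
  move=> [x y] /in_rect [h1 [h2 [h3 h4]]].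
  have [k hk] := hcov x y h1 h2 h3 h4.
  by exists k => //; apply/in_rect.
have Hsum : \sum_(0 <= n <oo) P (rect (ra n) (rb n) (rc n) (rd n)) <= e%:E.
  rewrite (eq_eseriesr (fun n _ => rect_area _ _ _ _ (proj1 (hr n)) (proj2 (hr n)))).
  apply: lime_le.
    apply: is_cvg_nneseries => n _ _; rewrite lee_fin; apply/RleP.
    have [h1 h2] := hr n; apply: Rmult_le_pos; apply/RleP; rewrite subr_ge0; exact/RleP.
  by apply: nearW => N; rewrite /= psumE lee_fin; apply/RleP; exact: hps.
by have := le_trans Hsub Hsum; rewrite /P rect_area // lee_fin => /RleP.
Qed.

Lemma disjoint_rects_area_le (ra rb rc rd : R) (xa xb ya yb : nat -> R) (G : list nat) :
  NoDup G ->
  (forall j, In j G -> Rle ra (xa j) /\ Rle (xa j) (xb j) /\ Rle (xb j) rb /\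
                      Rle rc (ya j) /\ Rle (ya j) (yb j) /\ Rle (yb j) rd) ->
  (forall j j', In j G -> In j' G -> j <> j' -> forall x y,
     Rle (xa j) x -> Rlt x (xb j) -> Rle (ya j) y -> Rlt y (yb j) ->
     Rle (xa j') x -> Rlt x (xb j') -> Rle (ya j') y -> Rlt y (yb j') -> False) ->
  Rle ra rb -> Rle rc rd ->
  Rle (sumL (fun j => Rmult (Rminus (xb j) (xa j)) (Rminus (yb j) (ya j))) G)
      (Rmult (Rminus rb ra) (Rminus rd rc)).
Proof.
move=> HG Hin Hdis hab hcd.
set P := ((@lebesgue_measure R) \x (@lebesgue_measure R)).
set area := fun j => Rmult (Rminus (xb j) (xa j)) (Rminus (yb j) (ya j)).
pose U (l : list nat) := [set z | exists j, In j l /\ rect (xa j) (xb j) (ya j) (yb j) z].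
have key : forall l, NoDup l -> (forall j, In j l -> In j G) ->
    measurable (U l) /\ P (U l) = (sumL area l)%:E.
  elim => [|j l IH] Hl Hsub.
    have -> : U [::] = set0 by apply/seteqP; split => z //= [? [[]]].
    by split; [exact: measurable0 | rewrite /P measure0].
  have [Hj Hl'] : ~ In j l /\ NoDup l by inversion Hl.
  have [IH1 IH2] := IH Hl' (fun j' h => Hsub j' (or_intror h)).
  have -> : U (j :: l) = rect (xa j) (xb j) (ya j) (yb j) `|` U l.
    apply/seteqP; split => z /=.
      by move=> [j' [[<-|h] hz]]; [left | right; exists j'].
    by move=> [hz|[j' [h hz]]]; [exists j; split; [left|] | exists j'; split; [right|]].
  split; first by apply: measurableU; [exact: rect_measurable | exact: IH1].
  have Hdisj : rect (xa j) (xb j) (ya j) (yb j) `&` U l = set0.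
    apply/seteqP; split => z //= [/in_rect hz [j' [h /in_rect hz']]].
    have Hne : j <> j' by move=> E; apply: Hj; rewrite E.
    have [h1 [h2 [h3 h4]]] := hz; have [h5 [h6 [h7 h8]]] := hz'.
    exact: (Hdis j j' (Hsub j (or_introl erefl)) (Hsub j' (or_intror h)) Hne
              _ _ h1 h2 h3 h4 h5 h6 h7 h8).
  rewrite /P (measureU _ (rect_measurable _ _ _ _) IH1 Hdisj).
  have [_ [hj1 [_ [_ [hj2 _]]]]] := Hin j (Hsub j (or_introl erefl)).
  transitivity ((area j)%:E + (sumL area l)%:E); last by rewrite -EFinD.
  by congr (_ + _); [exact: rect_area | exact: IH2].
have [mU PU] := key G HG (fun j h => h).
have Hle : P (U G) <= P (rect ra rb rc rd).
  apply: le_measure; rewrite ?inE //; first exact: rect_measurable.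
  move=> z [j [h /in_rect [h1 [h2 [h3 h4]]]]]; apply/in_rect.
  have [k1 [k2 [k3 [k4 [k5 k6]]]]] := Hin j h.
  repeat split; lra.
by move: Hle; rewrite PU /P rect_area // lee_fin => /RleP.
Qed.

End RectangleMeasure.

(* Clamping: [clamp_lo r1 r2 q1, clamp_hi r1 r2 q1 q2) is a subinterval of
   [r1, r2) that equals [r1, r2) ∩ [q1, q2) (possibly empty). *)
Definition clamp_lo (r1 r2 q1 : R) : R := Rmin (Rmax r1 q1) r2.
Definition clamp_hi (r1 r2 q1 q2 : R) : R := Rmax (clamp_lo r1 r2 q1) (Rmin r2 q2).

Ltac clamp_tac := unfold clamp_hi, clamp_lo, Rmin, Rmax in *; repeat destruct Rle_dec; lra.

Lemma clamp_bounds r1 r2 q1 q2 : r1 <= r2 ->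
  r1 <= clamp_lo r1 r2 q1 /\ clamp_lo r1 r2 q1 <= clamp_hi r1 r2 q1 q2 /\
  clamp_hi r1 r2 q1 q2 <= r2.
Proof. intros. repeat split; clamp_tac. Qed.

Lemma clamp_sub r1 r2 q1 q2 x :
  clamp_lo r1 r2 q1 <= x < clamp_hi r1 r2 q1 q2 -> q1 <= x < q2.
Proof. intros. split; clamp_tac. Qed.

Lemma clamp_inter r1 r2 q1 q2 x : r1 <= x < r2 -> q1 <= x < q2 ->
  clamp_lo r1 r2 q1 <= x < clamp_hi r1 r2 q1 q2.
Proof. intros. split; clamp_tac. Qed.

Section DisjointPieces.

Variables (E : set2) (ra rb rc rd : nat -> R) (e' : R).
Hypothesis hr : forall k, ra k <= rb k /\ rc k <= rd k.
Hypothesis hcov : forall z, E z -> exists k, ra k <= fst z < rb k /\ rc k <= snd z < rd k.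
Hypothesis hps : forall N, psum (fun k => (rb k - ra k) * (rd k - rc k)) N <= e'.

Definition trace_area (qa qb qc qd : R) (k : nat) : R :=
  (clamp_hi (ra k) (rb k) qa qb - clamp_lo (ra k) (rb k) qa) *
  (clamp_hi (rc k) (rd k) qc qd - clamp_lo (rc k) (rd k) qc).

Lemma trace_area_nonneg qa qb qc qd k : 0 <= trace_area qa qb qc qd k.
Proof.
  unfold trace_area. destruct (hr k).
  destruct (clamp_bounds (ra k) (rb k) qa qb) as [? [? ?]]; [assumption|].
  destruct (clamp_bounds (rc k) (rd k) qc qd) as [? [? ?]]; [assumption|].
  apply Rmult_le_pos; lra.
Qed.

(* The traces cover every part P of E inside the rectangle; so if P has outer
   measure at least v, their areas eventually add up to more than v - g. *)
Lemma trace_area_large (P : set2) qa qb qc qd v :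
  (forall z, P z -> E z /\ qa <= fst z < qb /\ qc <= snd z < qd) ->
  ~ outer_lt P v -> forall g, 0 < g -> exists N, psum (trace_area qa qb qc qd) N > v - g.
Proof.
  intros hP hv g Hg. apply NNPP. intro Hsmall. apply hv.
  exists (fun k => clamp_lo (ra k) (rb k) qa), (fun k => clamp_hi (ra k) (rb k) qa qb),
         (fun k => clamp_lo (rc k) (rd k) qc), (fun k => clamp_hi (rc k) (rd k) qc qd), (v - g).
  split; [lra|]. split.
  - intro k. destruct (hr k).
    destruct (clamp_bounds (ra k) (rb k) qa qb) as [? [? ?]]; [assumption|].
    destruct (clamp_bounds (rc k) (rd k) qc qd) as [? [? ?]]; [assumption|]. lra.
  - split.
    + intros z Hz. destruct (hP z Hz) as [HE [Hx Hy]].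
      destruct (hcov z HE) as [k [Hkx Hky]]. exists k.
      split; apply clamp_inter; assumption.
    + intro N. apply Rnot_gt_le. intro HN. apply Hsmall. exists N. exact HN.
Qed.

Lemma disjoint_pieces_le (G : list nat) (qa qb qc qd : nat -> R) (P : nat -> set2)
  (v : nat -> R) :
  NoDup G ->
  (forall j, qa j <= qb j /\ qc j <= qd j) ->
  (forall j j', In j G -> In j' G -> j <> j' -> forall x y,
      qa j <= x < qb j -> qc j <= y < qd j -> qa j' <= x < qb j' -> qc j' <= y < qd j' -> False) ->
  (forall j z, In j G -> P j z -> E z /\ qa j <= fst z < qb j /\ qc j <= snd z < qd j) ->
  (forall j, In j G -> ~ outer_lt (P j) (v j)) ->
  sumL v G <= e'.
Proof.
  intros hG hq hdis hP hv.
  set (ar j := trace_area (qa j) (qb j) (qc j) (qd j)).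
  (* the traces of each cover rectangle on the disjoint q-rectangles fit inside it *)
  assert (Hfit : forall N, sumL (fun j => psum (ar j) N) G <= e').
  { intro N. rewrite psum_sumL_swap. eapply Rle_trans; [|apply (hps N)].
    apply psum_le. intro k. destruct (hr k) as [hr1 hr2].
    apply (RectangleMeasure.disjoint_rects_area_le (ra k) (rb k) (rc k) (rd k)
      (fun j => clamp_lo (ra k) (rb k) (qa j)) (fun j => clamp_hi (ra k) (rb k) (qa j) (qb j))
      (fun j => clamp_lo (rc k) (rd k) (qc j)) (fun j => clamp_hi (rc k) (rd k) (qc j) (qd j))
      G hG); [| | exact hr1 | exact hr2].
    - intros j Hj.
      destruct (clamp_bounds (ra k) (rb k) (qa j) (qb j)) as [? [? ?]]; [assumption|].
      destruct (clamp_bounds (rc k) (rd k) (qc j) (qd j)) as [? [? ?]]; [assumption|].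
      repeat split; assumption.
    - intros j j' Hj Hj' Hne x y H1 H2 H3 H4 H5 H6 H7 H8.
      apply (hdis j j' Hj Hj' Hne x y); eapply clamp_sub; split; eassumption. }
  (* and for a finite family, the partial sums eventually exceed sum v - g *)
  assert (Hlarge : forall G', (forall j, In j G' -> In j G) -> forall g, 0 < g ->
     exists N, sumL (fun j => psum (ar j) N) G' > sumL v G' - g).
  { induction G' as [|j G' IH]; intros Hsub g Hg; [exists O; simpl; lra|].
    assert (HjG : In j G) by (apply Hsub; left; reflexivity).
    destruct (trace_area_large (P j) (qa j) (qb j) (qc j) (qd j) (v j)
      (fun z => hP j z HjG) (hv j HjG) (g / 2)) as [N1 HN1]; [lra|]. fold (ar j) in HN1.
    destruct (IH (fun j' h => Hsub j' (or_intror h)) (g / 2)) as [N2 HN2]; [lra|].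
    exists (Nat.max N1 N2). simpl.
    assert (psum (ar j) N1 <= psum (ar j) (Nat.max N1 N2))
      by (apply psum_mono; [intro; apply trace_area_nonneg | lia]).
    assert (sumL (fun j => psum (ar j) N2) G' <= sumL (fun j => psum (ar j) (Nat.max N1 N2)) G')
      by (apply sumL_le; intros j' _; apply psum_mono; [intro; apply trace_area_nonneg | lia]).
    lra. }
  apply Rnot_gt_le. intro Hgt.
  destruct (Hlarge G (fun j h => h) (sumL v G - e')) as [N HN]; [lra|].
  specialize (Hfit N). lra.
Qed.

End DisjointPieces.

Definition cell (t m1 m2 : nat) (z : R * R) : Prop :=
  in_cell (width t) m1 (fst z) /\ in_cell (width t) m2 (snd z).

Lemma dense_subcell (A : set2) dl t m1 m2 : 0 < dl ->
  outer_lt (fun z => cell t m1 m2 z /\ ~ A z) (dl * (width t * width t)) ->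
  exists j1 j2, (j1 < 4)%nat /\ (j2 < 4)%nat /\
    outer_lt (fun z => cell (S t) (4 * m1 + j1) (4 * m2 + j2) z /\ ~ A z)
       (dl * (width (S t) * width (S t))).
Proof.
  intros Hdl Hout. apply NNPP. intro Hn.
  destruct Hout as [ra [rb [rc [rd [e' [He [Hr [Hc Hp]]]]]]]].
  set (w := width (S t)). assert (Hw : 0 < w) by apply width_pos.
  assert (Ew : width t = 4 * w) by apply width_S.
  (* subcell number j < 16 is (j / 4, j mod 4) *)
  pose (j1 j := Nat.div j 4). pose (j2 j := Nat.modulo j 4).
  assert (Hj1 : forall j, (j < 16)%nat -> (j1 j < 4)%nat)
    by (intros j Hj; apply Nat.Div0.div_lt_upper_bound; lia).
  assert (Hj2 : forall j, (j2 j < 4)%nat) by (intro j; apply Nat.mod_upper_bound; lia).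
  assert (Hjj : forall j, j = (4 * j1 j + j2 j)%nat) by (intro j; apply Nat.div_mod_eq).
  pose (qa j := INR (4 * m1 + j1 j) * w). pose (qc j := INR (4 * m2 + j2 j) * w).
  assert (Hsum : sumL (fun _ => dl * (w * w)) (seq 0 16) <= e').
  { apply (disjoint_pieces_le (fun z => cell t m1 m2 z /\ ~ A z) ra rb rc rd e' Hr Hc Hp
      (seq 0 16) qa (fun j => qa j + w) qc (fun j => qc j + w)
      (fun j z => cell (S t) (4 * m1 + j1 j)%nat (4 * m2 + j2 j)%nat z /\ ~ A z)).
    - apply seq_NoDup.
    - intro j. lra.
    - intros j j' Hj Hj' Hne x y Hx Hy Hx' Hy'. apply Hne.
      pose proof (in_cell_unique _ _ _ _ Hw Hx Hx') as E1.
      pose proof (in_cell_unique _ _ _ _ Hw Hy Hy') as E2.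
      rewrite (Hjj j), (Hjj j'). lia.
    - intros j z Hj [[Hx Hy] Ha]. apply in_seq in Hj.
      split; [split; [split|exact Ha]|split; assumption].
      + rewrite Ew. exact (in_cell_parent _ _ _ _ Hw (Hj1 j ltac:(lia)) Hx).
      + rewrite Ew. exact (in_cell_parent _ _ _ _ Hw (Hj2 j) Hy).
    - intros j Hj Ho. apply in_seq in Hj. apply Hn. exists (j1 j), (j2 j).
      split; [apply Hj1; lia|]. split; [apply Hj2|]. exact Ho. }
  rewrite sumL_const, length_seq in Hsum. rewrite Ew in He. simpl INR in Hsum. nra.
Qed.

Lemma dense_subcell_iter (H : nat -> nat) (A : set2) dl dd :
  (forall t, 4 * H t <= H (S t))%nat ->
  forall t m1 m2, 0 < dl -> (m1 < H t)%nat -> (m2 < H t)%nat ->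
  outer_lt (fun z => cell t m1 m2 z /\ ~ A z) (dl * (width t * width t)) ->
  exists n1 n2, (n1 < H (t + dd))%nat /\ (n2 < H (t + dd))%nat /\
    outer_lt (fun z => cell (t + dd) n1 n2 z /\ ~ A z)
             (dl * (width (t + dd) * width (t + dd))).
Proof.
  intros HH. induction dd as [|dd IH]; intros t m1 m2 Hdl H1 H2 Ho.
  - exists m1, m2. rewrite Nat.add_0_r. auto.
  - destruct (dense_subcell A dl t m1 m2 Hdl Ho) as [j1 [j2 [Hj1 [Hj2 Ho']]]].
    rewrite Nat.add_succ_r, <- Nat.add_succ_l.
    specialize (HH t).
    apply (IH (S t) (4 * m1 + j1)%nat (4 * m2 + j2)%nat Hdl); [lia | lia | exact Ho'].
Qed.

Lemma cell_nest t t' m1 m2 m1' m2' z z' : (t <= t')%nat ->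
  cell t m1 m2 z -> cell t' m1' m2' z -> cell t' m1' m2' z' -> cell t m1 m2 z'.
Proof.
  unfold cell. intros Hle [Hx Hy] [Hx' Hy'] [Hx'' Hy''].
  pose proof (width_pow t (t' - t)) as Ew. replace (t + (t' - t))%nat with t' in Ew by lia.
  rewrite Ew in *. pose proof (width_pos t') as Hw.
  split; eapply in_cell_nest; eassumption.
Qed.

Lemma least_nat (P : nat -> Prop) n : P n ->
  exists t, P t /\ forall t', (t' < t)%nat -> ~ P t'.
Proof.
  revert n. induction n as [n IH] using (well_founded_induction lt_wf).
  intro Hn. destruct (classic (exists t', (t' < n)%nat /\ P t')) as [[t' [Ht' Hp]]|Hno].
  - exact (IH t' Ht' Hp).
  - exists n. split; [exact Hn|]. intros t' Ht' Hp. apply Hno. exists t'. auto.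
Qed.

Definition code (t m1 m2 : nat) : nat := to_nat (t, to_nat (m1, m2)).
Definition code_stage (k : nat) : nat := fst (of_nat k).
Definition code_m1 (k : nat) : nat := fst (of_nat (snd (of_nat k))).
Definition code_m2 (k : nat) : nat := snd (of_nat (snd (of_nat k))).

Lemma code_decode t m1 m2 :
  code_stage (code t m1 m2) = t /\ code_m1 (code t m1 m2) = m1 /\ code_m2 (code t m1 m2) = m2.
Proof. unfold code_stage, code_m1, code_m2, code. rewrite cancel_of_to. cbn [fst snd]. rewrite cancel_of_to. auto. Qed.

Lemma decode_injective k k' : code_stage k = code_stage k' -> code_m1 k = code_m1 k' ->
  code_m2 k = code_m2 k' -> k = k'.
Proof.
  unfold code_stage, code_m1, code_m2. intros E1 E2 E3.
  assert (Hinj : forall u v, of_nat u = of_nat v -> u = v)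
    by (intros u v E; rewrite <- (cancel_to_of u), <- (cancel_to_of v), E; reflexivity).
  apply Hinj. destruct (of_nat k) as [u1 u2], (of_nat k') as [v1 v2]. simpl in *.
  f_equal; [exact E1|]. apply Hinj.
  destruct (of_nat u2), (of_nat v2). simpl in *. congruence.
Qed.

Section MaximalCells.

Variable H : nat -> nat.

Definition maximal_cell (U : set2) (t m1 m2 : nat) : Prop :=
  (m1 < H t)%nat /\ (m2 < H t)%nat /\ (forall z, cell t m1 m2 z -> U z) /\
  (forall t' n1 n2, (t' < t)%nat -> (n1 < H t')%nat -> (n2 < H t')%nat ->
     (exists z, cell t' n1 n2 z /\ cell t m1 m2 z) -> ~ (forall z, cell t' n1 n2 z -> U z)).

Lemma maximal_cell_disjoint U t m1 m2 t' n1 n2 z :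
  maximal_cell U t m1 m2 -> maximal_cell U t' n1 n2 -> cell t m1 m2 z -> cell t' n1 n2 z ->
  t = t' /\ m1 = n1 /\ m2 = n2.
Proof.
  intros [H1 [H2 [H3 H4]]] [G1 [G2 [G3 G4]]] Hz Hz'.
  destruct (lt_eq_lt_dec t t') as [[Hlt|Heq]|Hgt].
  - exfalso. apply (G4 t m1 m2 Hlt H1 H2); [exists z; auto | exact H3].
  - subst t'. destruct Hz as [Hx Hy]. destruct Hz' as [Hx' Hy'].
    pose proof (width_pos t).
    split; [reflexivity|]. split; eapply in_cell_unique; eassumption.
  - exfalso. apply (H4 t' n1 n2 Hgt G1 G2); [exists z; auto | exact G3].
Qed.

(* A cell inside U lies in a maximal one: take the coarsest cell inside U
   containing a given point. *)
Lemma maximal_cell_cover (U : set2) z t0 m1 m2 :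
  (m1 < H t0)%nat -> (m2 < H t0)%nat -> cell t0 m1 m2 z ->
  (forall z', cell t0 m1 m2 z' -> U z') ->
  exists t n1 n2, maximal_cell U t n1 n2 /\ cell t n1 n2 z.
Proof.
  intros H1 H2 Hz HU.
  destruct (least_nat (fun t => exists n1 n2, (n1 < H t)%nat /\ (n2 < H t)%nat /\
     cell t n1 n2 z /\ (forall z', cell t n1 n2 z' -> U z')) t0)
    as [t [[n1 [n2 [G1 [G2 [Gz GU]]]]] Hmin]]; [exists m1, m2; auto|].
  exists t, n1, n2. split; [|exact Gz].
  split; [exact G1|]. split; [exact G2|]. split; [exact GU|].
  intros t' k1 k2 Hlt K1 K2 [z'' [Hz1 Hz2]] HU'.
  apply (Hmin t' Hlt). exists k1, k2. split; [exact K1|]. split; [exact K2|].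
  split; [|exact HU']. apply (cell_nest t' t k1 k2 n1 n2 z'' z); auto. lia.
Qed.

Lemma open_cell_around (U : set2) z :
  eventually_labelled H (fst z) -> eventually_labelled H (snd z) -> open2 U -> U z ->
  exists t m1 m2, (m1 < H t)%nat /\ (m2 < H t)%nat /\ cell t m1 m2 z /\
    (forall z', cell t m1 m2 z' -> U z').
Proof.
  intros [n1 Hn1] [n2 Hn2] HU Hz. destruct (HU z Hz) as [r [Hr Hball]].
  destruct (pow_lt_1_zero (/ 4) ltac:(rewrite Rabs_pos_eq; lra) r Hr) as [N HN].
  set (t := Nat.max N (Nat.max n1 n2)).
  destruct (Hn1 t ltac:(lia)) as [M1 [HM1 Hx]].
  destruct (Hn2 t ltac:(lia)) as [M2 [HM2 Hy]].
  exists t, M1, M2. split; [exact HM1|]. split; [exact HM2|]. split; [split; assumption|].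
  assert (Hw : width t < r).
  { specialize (HN t ltac:(lia)). unfold width.
    rewrite Rabs_pos_eq in HN; [exact HN | apply pow_le; lra]. }
  unfold cell, in_cell in *.
  intros z' [Hx' Hy']. apply Hball; apply Rabs_def1; lra.
Qed.

Section Enumeration.

Variable U : set2.

Let is_max (k : nat) : Prop := maximal_cell U (code_stage k) (code_m1 k) (code_m2 k).

(* The k-th coded maximal cell of U as an interval in the coordinate picked
   by [m] (either [code_m1] or [code_m2]); empty if k codes no maximal cell. *)
Definition max_lo (m : nat -> nat) (k : nat) : R :=
  if excluded_middle_informative (is_max k) then INR (m k) * width (code_stage k) else 0.
Definition max_hi (m : nat -> nat) (k : nat) : R :=
  if excluded_middle_informative (is_max k)
  then INR (m k) * width (code_stage k) + width (code_stage k) else 0.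

Lemma max_lo_hi m k : max_lo m k <= max_hi m k.
Proof.
  unfold max_lo, max_hi. pose proof (width_pos (code_stage k)).
  destruct (excluded_middle_informative (is_max k)); lra.
Qed.

Lemma max_rect_cell k z :
  max_lo code_m1 k <= fst z < max_hi code_m1 k -> max_lo code_m2 k <= snd z < max_hi code_m2 k ->
  is_max k /\ cell (code_stage k) (code_m1 k) (code_m2 k) z.
Proof.
  unfold max_lo, max_hi. intros Hx Hy.
  destruct (excluded_middle_informative (is_max k)) as [HF|HF]; [|lra].
  split; [exact HF | split; assumption].
Qed.

Lemma max_rect_area dl k : dl * ((max_hi code_m1 k - max_lo code_m1 k) *
  (max_hi code_m2 k - max_lo code_m2 k)) =
  if excluded_middle_informative (is_max k)
  then dl * (width (code_stage k) * width (code_stage k)) else 0.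
Proof. unfold max_lo, max_hi. destruct (excluded_middle_informative (is_max k)); ring. Qed.

Lemma max_rect_of_cell k z : is_max k -> cell (code_stage k) (code_m1 k) (code_m2 k) z ->
  max_lo code_m1 k <= fst z < max_hi code_m1 k /\
  max_lo code_m2 k <= snd z < max_hi code_m2 k.
Proof.
  intros HF [Hx Hy]. unfold max_lo, max_hi.
  destruct (excluded_middle_informative (is_max k)); [split; assumption | contradiction].
Qed.

Lemma max_rect_cover t n1 n2 z : maximal_cell U t n1 n2 -> cell t n1 n2 z ->
  exists k, max_lo code_m1 k <= fst z < max_hi code_m1 k /\
            max_lo code_m2 k <= snd z < max_hi code_m2 k.
Proof.
  intros HF Hz. exists (code t n1 n2).
  destruct (code_decode t n1 n2) as [Et [E1 E2]].
  apply max_rect_of_cell; unfold is_max; rewrite Et, E1, E2; assumption.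
Qed.

End Enumeration.

End MaximalCells.

(* Otherwise
   the maximal cells of an open U ⊇ A with U \ A small would, by disjointness,
   cover A with total area < eps0 for every eps0 > 0. *)
Lemma dense_cell_exists (H : nat -> nat) (A : set2) dl : 0 < dl ->
  (forall z, A z -> eventually_labelled H (fst z) /\ eventually_labelled H (snd z)) ->
  measurable2 A -> ~ null2 A ->
  exists t m1 m2, (m1 < H t)%nat /\ (m2 < H t)%nat /\
    outer_lt (fun z => cell t m1 m2 z /\ ~ A z) (dl * (width t * width t)).
Proof.
  intros Hdl HX Hm Hn.
  assert (Heps : exists eps0, 0 < eps0 /\ ~ outer_lt A eps0).
  { apply NNPP. intro Hall. apply Hn. intros eps Heps. apply NNPP. intro H'.
    apply Hall. exists eps. auto. }
  destruct Heps as [eps0 [Heps0 Hno0]].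
  apply NNPP. intro Hno.
  destruct (Hm (dl * eps0 / 2)) as [U [HUo [HAU Hout]]]; [nra|].
  destruct Hout as [ra [rb [rc [rd [e' [He [Hr [Hc Hp]]]]]]]].
  set (qa := max_lo H U code_m1). set (qb := max_hi H U code_m1).
  set (qc := max_lo H U code_m2). set (qd := max_hi H U code_m2).
  (* the maximal cells are disjoint and each has large outer measure outside A *)
  assert (Hpieces : forall N, sumL (fun k => dl * ((qb k - qa k) * (qd k - qc k))) (seq 0 N) <= e').
  { intro N.
    apply (disjoint_pieces_le (fun z => U z /\ ~ A z) ra rb rc rd e' Hr Hc Hp (seq 0 N)
      qa qb qc qd (fun k z => (qa k <= fst z < qb k /\ qc k <= snd z < qd k) /\ ~ A z)).
    - apply seq_NoDup.
    - intro k. split; apply max_lo_hi.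
    - intros j j' _ _ Hne x y Hx Hy Hx' Hy'.
      destruct (max_rect_cell H U j (x, y) Hx Hy) as [F1 S1].
      destruct (max_rect_cell H U j' (x, y) Hx' Hy') as [F2 S2].
      destruct (maximal_cell_disjoint _ _ _ _ _ _ _ _ _ F1 F2 S1 S2) as [E1 [E2 E3]].
      exact (Hne (decode_injective j j' E1 E2 E3)).
    - intros k z _ [[Hx Hy] Ha].
      destruct (max_rect_cell H U k z Hx Hy) as [[_ [_ [HU _]]] Hs].
      split; [split; [exact (HU z Hs) | exact Ha] | split; assumption].
    - intros k _ Ho. unfold qa, qb, qc, qd in Ho. rewrite max_rect_area in Ho.
      destruct (excluded_middle_informative _) as [HF | _]; [|exact (not_outer_lt0 _ Ho)].
      apply Hno. exists (code_stage k), (code_m1 k), (code_m2 k).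
      destruct HF as [HF1 [HF2 HF3]]. split; [exact HF1|]. split; [exact HF2|].
      revert Ho. apply outer_mono. intros z [Hz Ha]. split; [|exact Ha].
      apply max_rect_of_cell; [split; [|split]; assumption | exact Hz]. }
  (* hence they cover A with total area at most e' / dl < eps0 *)
  apply Hno0. exists qa, qb, qc, qd, (e' / dl).
  split; [apply Rmult_lt_reg_r with dl; [exact Hdl|]; field_simplify; nra|].
  split; [intro k; split; apply max_lo_hi|]. split.
  - intros z Hz. destruct (HX z Hz) as [HX1 HX2].
    destruct (open_cell_around H U z HX1 HX2 HUo (HAU z Hz))
      as [t0 [m1 [m2 [H1 [H2 [Hs HU]]]]]].
    destruct (maximal_cell_cover H U z t0 m1 m2 H1 H2 Hs HU) as [t [n1 [n2 [HF Hs']]]].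
    exact (max_rect_cover H U t n1 n2 z HF Hs').
  - intro N. rewrite psum_seq. specialize (Hpieces N). rewrite sumL_scale in Hpieces.
    apply Rmult_le_reg_r with dl; [exact Hdl|]. field_simplify; lra.
Qed.

(* If [F^n] translates a whole square of side w by (u, v), and both the square
   and its translate lie in a region Q where A misses outer measure < w^2/4,
   then [A ∩ F^-n A] is not null: otherwise the square would be covered by
   three sets of outer measure < w^2/4 each. *)
Lemma translated_square_not_null (A Q : set2) (F : R * R -> R * R) n w i j u v : 0 < w ->
  outer_lt (fun z => Q z /\ ~ A z) (w * w / 4) ->
  (forall z, in_cell w i (fst z) -> in_cell w j (snd z) ->
     Q z /\ Q (fst z + u, snd z + v) /\ Nat.iter n F z = (fst z + u, snd z + v)) ->
  ~ null2 (fun z => A (Nat.iter n F z) /\ A z).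
Proof.
  intros Hw HQ Hsq Hnull.
  assert (HB : outer_lt (fun z => A (Nat.iter n F z) /\ A z) (w * w / 4))
    by (apply Hnull; nra).
  pose proof (outer_union2 _ _ _ _ HB
               (outer_union2 _ _ _ _ HQ (outer_translate _ _ u v HQ))) as HU.
  destruct HU as [ra [rb [rc [rd [e' [He [Hr [Hc Hp]]]]]]]].
  assert (Harea : (INR i * w + w - INR i * w) * (INR j * w + w - INR j * w) <= e').
  { apply (RectangleMeasure.rect_area_le_cover _ _ _ _ e' ra rb rc rd);
      [lra | lra | exact Hr | | exact Hp].
    intros x y H1 H2 H3 H4.
    destruct (Hc (x, y)) as [k Hk]; [|exists k; simpl in Hk; tauto].
    destruct (Hsq (x, y)) as [HQ1 [HQ2 Hit]]; [split; assumption.. |].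
    simpl in HQ2, Hit. rewrite Hit.
    destruct (classic (A (x, y))), (classic (A (x + u, y + v))); tauto. }
  nra.
Qed.

Lemma conservative_of_translations (H : nat -> nat) (X : R -> Prop) (F : R * R -> R * R) :
  (forall x, X x -> eventually_labelled H x) ->
  (forall t, 4 * H t <= H (S t))%nat ->
  (forall t0, exists N k, (t0 <= N)%nat /\ (1 <= k)%nat /\
     forall n1 n2, (n1 < H N)%nat -> (n2 < H N)%nat ->
     exists i1 i2 j1 j2 u v, (i1 < 4)%nat /\ (i2 < 4)%nat /\ (j1 < 4)%nat /\ (j2 < 4)%nat /\
       forall z, in_cell (width (S N)) (4 * n1 + i1) (fst z) ->
                 in_cell (width (S N)) (4 * n2 + i2) (snd z) ->
         in_cell (width (S N)) (4 * n1 + j1) (fst z + u) /\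
         in_cell (width (S N)) (4 * n2 + j2) (snd z + v) /\
         Nat.iter k F z = (fst z + u, snd z + v)) ->
  conservative2 X F.
Proof.
  intros HX Hgrowth Htrans A HAX Hm Hn.
  destruct (dense_cell_exists H A (1 / 64) ltac:(lra)
      (fun z Hz => conj (HX _ (proj1 (HAX z Hz))) (HX _ (proj2 (HAX z Hz)))) Hm Hn)
    as [t [m1 [m2 [H1 [H2 Ho]]]]].
  destruct (Htrans t) as [N [k [HtN [Hk Hsh]]]].
  destruct (dense_subcell_iter H A (1 / 64) (N - t) Hgrowth t m1 m2 ltac:(lra) H1 H2 Ho)
    as [n1 [n2 [G1 [G2 Go]]]].
  replace (t + (N - t))%nat with N in * by lia.
  destruct (Hsh n1 n2 G1 G2) as [i1 [i2 [j1 [j2 [u [v [Hi1 [Hi2 [Hj1 [Hj2 Hz]]]]]]]]]].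
  exists k. split; [exact Hk|].
  set (w := width (S N)). assert (Hw : 0 < w) by apply width_pos.
  assert (Ew : width N = 4 * w) by apply width_S.
  apply (translated_square_not_null A (cell N n1 n2) F k w (4 * n1 + i1) (4 * n2 + i2) u v Hw).
  - replace (w * w / 4) with (1 / 64 * (width N * width N)) by (rewrite Ew; field).
    exact Go.
  - intros z Hx Hy. destruct (Hz z Hx Hy) as [Hx' [Hy' Hit]].
    unfold cell. rewrite Ew. simpl fst; simpl snd.
    refine (conj (conj _ _) (conj (conj _ _) _)).
    + exact (in_cell_parent _ _ _ _ Hw Hi1 Hx).
    + exact (in_cell_parent _ _ _ _ Hw Hi2 Hy).
    + exact (in_cell_parent _ _ _ _ Hw Hj1 Hx').
    + exact (in_cell_parent _ _ _ _ Hw Hj2 Hy').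
    + exact Hit.
Qed.

Lemma iter_prodmap (f g : R -> R) k z :
  Nat.iter k (prodmap f g) z = (Nat.iter k f (fst z), Nat.iter k g (snd z)).
Proof.
  induction k as [|k IH]; [destruct z; reflexivity|].
  rewrite !Nat.iter_succ, IH. reflexivity.
Qed.

Lemma iter_iter (f : R -> R) k p x : Nat.iter k (Nat.iter p f) x = Nat.iter (k * p) f x.
Proof.
  induction k as [|k IH]; [reflexivity|].
  rewrite Nat.iter_succ, IH, Nat.mul_succ_l, Nat.add_comm, Nat.iter_add. reflexivity.
Qed.

Section ProductTranslations.

Variables (a b c d : nat -> nat) (p q N k : nat).
Hypothesis Hp : pp a b c d N = (k * p)%nat.
Hypothesis Hq : qq a b c d N = (k * q)%nat.

Local Notation T := (Tmap a b c d).
Local Notation w := (width (S N)).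

Lemma iter_T_pair_translation n1 n2 z :
  (n1 < Hc a b c d N)%nat -> (n2 < Hc a b c d N)%nat ->
  in_cell w (4 * n1 + 0) (fst z) -> in_cell w (4 * n2 + 2) (snd z) ->
  Nat.iter k (prodmap (Nat.iter p T) (Nat.iter q T)) z = (fst z + w, snd z + w).
Proof.
  intros H1 H2 Hx Hy.
  rewrite iter_prodmap, !iter_iter, <- Hp, <- Hq, pp_off, qq_off.
  rewrite (iter_T_next_copy a b c d N n1 0 (fst z)), (iter_T_next_copy a b c d N n2 2 (snd z));
    auto.
Qed.

Lemma iter_Tinv_pair_translation n1 n2 z :
  (n1 < Hc a b c d N)%nat -> (n2 < Hc a b c d N)%nat ->
  in_cell w (4 * n1 + 1) (fst z) -> in_cell w (4 * n2 + 2) (snd z) ->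
  Nat.iter k (prodmap (Nat.iter p (Tinv a b c d)) (Nat.iter q T)) z = (fst z + - w, snd z + w).
Proof.
  intros H1 H2 Hx Hy.
  rewrite iter_prodmap, !iter_iter, <- Hp, <- Hq, pp_off, qq_off.
  rewrite (iter_Tinv_prev_copy a b c d N n1 0 (fst z)), (iter_T_next_copy a b c d N n2 2 (snd z));
    auto.
Qed.

End ProductTranslations.

Lemma Hc_pos a b c d n : (0 < Hc a b c d n)%nat.
Proof. induction n as [|n IH]; cbn [Hc]; lia. Qed.

Theorem mainTheorem2 (p q : nat) (a b c d : nat -> nat)
  (hp : (0 < p)%nat) (hq : (0 < q)%nat)
  (ha : forall n, (0 < a n)%nat) (hb : forall n, (0 < b n)%nat)
  (hc : forall n, (0 < c n)%nat) (hd : forall n, (0 < d n)%nat)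
  (hW : in_W a b c d)
  (hinf : forall N : nat, exists n : nat, (N <= n)%nat /\
            exists k : nat, qq a b c d n = (k * q)%nat /\ pp a b c d n = (k * p)%nat) :
  conservative2 (Xspace a b c d)
    (prodmap (Nat.iter p (Tmap a b c d)) (Nat.iter q (Tmap a b c d))) /\
  conservative2 (Xspace a b c d)
    (prodmap (Nat.iter p (Tinv a b c d)) (Nat.iter q (Tmap a b c d))).
Proof.
  assert (Hgrowth : forall t, (4 * Hc a b c d t <= Hc a b c d (S t))%nat)
    by (intro t; cbn [Hc]; lia).
  (* the good stages N come with k >= 1, since p_N >= H_N > 0 *)
  assert (Hstages : forall t0, exists N k, (t0 <= N)%nat /\ (1 <= k)%nat /\
            pp a b c d N = (k * p)%nat /\ qq a b c d N = (k * q)%nat).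
  { intro t0. destruct (hinf t0) as [N [HN [k [Hq Hp]]]]. exists N, k.
    pose proof (Hc_pos a b c d N). unfold pp in Hp.
    repeat split; [exact HN | destruct k; lia | exact Hp | exact Hq]. }
  split; apply (conservative_of_translations (Hc a b c d));
    try exact (Xspace_labelled a b c d); try exact Hgrowth;
    intro t0; destruct (Hstages t0) as [N [k [HN [Hk [Hp Hq]]]]];
    exists N, k; refine (conj HN (conj Hk _)); intros n1 n2 H1 H2.
  - exists 0%nat, 2%nat, 1%nat, 3%nat, (width (S N)), (width (S N)).
    repeat (split; [lia|]). intros z Hx Hy. split; [|split].
    + exact (in_cell_next _ _ _ _ Hx).
    + exact (in_cell_next _ _ _ _ Hy).
    + exact (iter_T_pair_translation a b c d p q N k Hp Hq n1 n2 z H1 H2 Hx Hy).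
  - exists 1%nat, 2%nat, 0%nat, 3%nat, (- width (S N)), (width (S N)).
    repeat (split; [lia|]). intros z Hx Hy. split; [|split].
    + exact (in_cell_prev _ _ _ _ Hx).
    + exact (in_cell_next _ _ _ _ Hy).
    + exact (iter_Tinv_pair_translation a b c d p q N k Hp Hq n1 n2 z H1 H2 Hx Hy).
Qed.
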